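(* If $A\subseteq\mathbb N_0\times\mathbb S$ is a Schnorr test for a computable forecasting system $\varphi$, then $n\mapsto\overline P_\varphi([A_n])$ is a computable sequence of real numbers.
   Context: $\mathbb N_0=\{0,1,\dots\}$; $\Omega=\{0,1\}^{\mathbb N}$; $\mathbb S$ finite binary strings, $|s|$ length, $\omega^n$ first $n$ entries of $\omega$; $[s]=\{\omega:\omega^{|s|}=s\}$, $[A]=\bigcup_{s\in A}[s]$. For $A\subseteq\mathbb N_0\times\mathbb S$: $A_n=\{s:(n,s)\in A\}$, $A_n^{<\ell}=\{s\in A_n:|s|<\ell\}$. $\mathcal I$: nonempty closed subintervals of $[0,1]$; $\overline E_I(f)=\max_{p\in I}[pf(1)+(1-p)f(0)]$. Forecasting system $\varphi:\mathbb S\to\mathcal I$, $\underline\varphi=\min\varphi$, $\overline\varphi=\max\varphi$. Supermartingale: $M:\mathbb S\to\mathbb R$ with $\overline E_{\varphi(s)}(M(s\,\cdot))\le M(s)$ for all $s$. $\overline P_\varphi(G)=\inf\{M(\square):M\text{ supermartingale for }\varphi,\ \liminf_nM(\omega^n)\ge\mathbb 1_G(\omega)\ \forall\omega\}$. A real map $r$ on an encoded countable set is computable if there is a recursive rational $q$ with $|r(d)-q(d,N)|\le2^{-N}$; $\varphi$ is computable if $\underline\varphi,\overline\varphi$ are computable. A Schnorr test for $\varphi$ is a recursive $A\subseteq\mathbb N_0\times\mathbb S$ with $\overline P_\varphi([A_n])\le2^{-n}$ for all $n$, and a recursive $e:\mathbb N_0^2\to\mathbb N_0$ with $\overline P_\varphi([A_n]\setminus[A_n^{<\ell}])\le2^{-N}$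 for all $(N,n)$ and $\ell\ge e(N,n)$. *)

From Stdlib Require Import Reals List ClassicalEpsilon.
From Coquelicot Require Import Coquelicot.
Import ListNotations.
Open Scope R_scope.

Inductive mu : Type :=
| muZero : mu
| muSucc : mu
| muProj : nat -> mu
| muComp : mu -> list mu -> mu
| muPrim : mu -> mu -> mu
| muMin  : mu -> mu.

Inductive mu_eval : mu -> list nat -> nat -> Prop :=
| ev_zero xs : mu_eval muZero xs 0
| ev_succ x xs : mu_eval muSucc (x :: xs) (S x)
| ev_proj i xs : mu_eval (muProj i) xs (nth i xs 0%nat)
| ev_comp f gs xs ys z :
    Forall2 (fun g y => mu_eval g xs y) gs ys ->
    mu_eval f ys z -> mu_eval (muComp f gs) xs z
| ev_prim0 f g xs z : mu_eval f xs z -> mu_eval (muPrim f g) (0%nat :: xs) z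
| ev_primS f g n xs r z :
    mu_eval (muPrim f g) (n :: xs) r ->
    mu_eval g (n :: r :: xs) z -> mu_eval (muPrim f g) (S n :: xs) z
| ev_min f xs n :
    mu_eval f (n :: xs) 0%nat ->
    (forall m, (m < n)%nat -> exists k, k <> 0%nat /\ mu_eval f (m :: xs) k) ->
    mu_eval (muMin f) xs n.

Definition recursive1 (f : nat -> nat) : Prop :=
  exists p : mu, forall x, mu_eval p [x] (f x).
Definition recursive2 (f : nat -> nat -> nat) : Prop :=
  exists p : mu, forall x y, mu_eval p [x; y] (f x y).

Definition bstr := list bool.
Definition path := nat -> bool.          (* Omega = {0,1}^N, indexed from 0 *)

Fixpoint bcode (s : bstr) : nat :=
  match s with
  | [] => 0%nat
  | b :: s' => (2 * bcode s' + 1 + (if b then 1 else 0))%nat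
  end.

Definition prefix (w : path) (n : nat) : bstr := map w (seq 0 n).

Definition cyl (s : bstr) : path -> Prop := fun w => prefix w (length s) = s.

Definition cylset (B : bstr -> Prop) : path -> Prop :=
  fun w => exists s, B s /\ cyl s w.

Definition indic (G : path -> Prop) (w : path) : R :=
  match excluded_middle_informative (G w) with left _ => 1 | right _ => 0 end.

(* phi : S -> I, I the nonempty closed subintervals of [0,1];
   phi(s) = [flo s, fhi s]. *)
Record forecast : Type := {
  flo : bstr -> R;
  fhi : bstr -> R;
  f_ok : forall s, 0 <= flo s /\ flo s <= fhi s /\ fhi s <= 1 }.

(* Upper expectation of f : {0,1} -> R for the interval [lo, hi]:
   max_{p in [lo,hi]} p f(1) + (1-p) f(0). We only use it through the
   inequality  upper_exp <= c, written out as: every p in [lo,hi] gives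
   p f(1) + (1-p) f(0) <= c (the max is attained on the compact interval). *)
Definition upper_exp_le (lo hi : R) (f : bool -> R) (c : R) : Prop :=
  forall p, lo <= p <= hi -> p * f true + (1 - p) * f false <= c.

Definition supermartingale (phi : forecast) (M : bstr -> R) : Prop :=
  forall s, upper_exp_le (flo phi s) (fhi phi s) (fun x => M (s ++ [x])) (M s).

Definition upper_prob (phi : forecast) (G : path -> Prop) : Rbar :=
  Glb_Rbar (fun v => exists M : bstr -> R,
    supermartingale phi M /\
    (forall w, Rbar_le (Finite (indic G w)) (LimInf_seq (fun n => M (prefix w n)))) /\
    v = M []).

(* The rational coded by (a,b,c) : (a - b)/(c + 1). A recursive rational
   map q(d, N) is given by three recursive functions a, b, c. *)
Definition ratc (a b c : nat) : R := (INR a - INR b) / INR (S c).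

Definition computable_rmap {X : Type} (enc : X -> nat) (r : X -> R) : Prop :=
  exists a b c : nat -> nat -> nat,
    recursive2 a /\ recursive2 b /\ recursive2 c /\
    forall d N, Rabs (r d - ratc (a (enc d) N) (b (enc d) N) (c (enc d) N)) <= (/2) ^ N.

(* computable sequence of real numbers (given as extended-real values;
   in particular every value is required to be a real number) *)
Definition computable_rbar_seq (r : nat -> Rbar) : Prop :=
  exists a b c : nat -> nat -> nat,
    recursive2 a /\ recursive2 b /\ recursive2 c /\
    forall n N, exists x : R, r n = Finite x /\
      Rabs (x - ratc (a n N) (b n N) (c n N)) <= (/2) ^ N.

Definition computable_forecast (phi : forecast) : Prop :=
  computable_rmap bcode (flo phi) /\ computable_rmap bcode (fhi phi).

Definition recursive_set (A : nat -> bstr -> bool) : Prop :=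
  exists chi : nat -> nat -> nat, recursive2 chi /\
    forall n s, chi n (bcode s) = (if A n s then 1%nat else 0%nat).

Definition An (A : nat -> bstr -> bool) (n : nat) : bstr -> Prop :=
  fun s => A n s = true.
Definition An_lt (A : nat -> bstr -> bool) (n l : nat) : bstr -> Prop :=
  fun s => A n s = true /\ (length s < l)%nat.

Definition schnorr_test (phi : forecast) (A : nat -> bstr -> bool) : Prop :=
  recursive_set A /\
  (forall n, Rbar_le (upper_prob phi (cylset (An A n))) (Finite ((/2) ^ n))) /\
  exists e : nat -> nat -> nat, recursive2 e /\
    forall N n l, (e N n <= l)%nat ->
      Rbar_le (upper_prob phi (fun w => cylset (An A n) w /\ ~ cylset (An_lt A n l) w))
              (Finite ((/2) ^ N)).

From Stdlib Require Import Reals List.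
From Coquelicot Require Import Coquelicot.
From Stdlib Require Import Arith Lia Lra Classical ClassicalEpsilon.
Import ListNotations.

(* Fix [n] and an accuracy [N]; the test provides a horizon [l = e (N + 1) n] beyond
   which [[A_n]] has upper probability at most [2^-(N+1)].  The finite-horizon event
   [[A_n^{<l}]] has upper probability equal to the value of an [l]-step game computed
   by backward induction on binary strings (its optimal supermartingale is explicit),
   so by monotonicity and subadditivity [upper_prob phi [A_n]] lies within
   [2^-(N+1)] above that game value.  Running the same backward induction in integer
   arithmetic at precision [2^(N + 3 + l)] costs at most [3] units per level, hence
   [2^-(N+1)] in total. *)

Open Scope nat_scope.

Definition mrec (f : list nat -> nat) : Prop :=
  exists p : mu, forall xs, mu_eval p xs (f xs).

Lemma rec_ext f g : mrec f -> (forall xs, f xs = g xs) -> mrec g.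
Proof. intros [p Hp] E; exists p; intros xs; rewrite <- E; auto. Qed.

Lemma rec_proj i : mrec (fun xs => nth i xs 0).
Proof. exists (muProj i); intros; constructor. Qed.

Lemma rec_succ g : mrec g -> mrec (fun xs => S (g xs)).
Proof.
  intros [p Hp]; exists (muComp muSucc [p]); intros xs.
  econstructor; repeat constructor; apply Hp.
Qed.

Lemma rec_const k : mrec (fun _ => k).
Proof.
  induction k as [|k IH]; [exists muZero; intros; constructor|].
  exact (rec_succ _ IH).
Qed.

Lemma rec_programs (gs : list (list nat -> nat)) : List.Forall mrec gs ->
  exists ps, forall xs, Forall2 (fun p y => mu_eval p xs y) ps (map (fun g => g xs) gs).
Proof.
  induction 1 as [|g gs [p Hp] _ [ps IH]].
  - exists []; constructor.
  - exists (p :: ps); constructor; auto.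
Qed.

Lemma rec_comp f (gs : list (list nat -> nat)) :
  mrec f -> List.Forall mrec gs -> mrec (fun xs => f (map (fun g => g xs) gs)).
Proof.
  intros [pf Hf] [ps Hps]%rec_programs.
  exists (muComp pf ps); intros xs; econstructor; eauto.
Qed.

Ltac rec_list := repeat (apply Forall_cons || apply Forall_nil).

Lemma rec_lift1 (op : nat -> nat) g :
  mrec (fun xs => op (nth 0 xs 0)) -> mrec g -> mrec (fun xs => op (g xs)).
Proof. intros Ho Hg. exact (rec_comp _ [g] Ho ltac:(rec_list; auto)). Qed.

Lemma rec_lift2 (op : nat -> nat -> nat) g1 g2 :
  mrec (fun xs => op (nth 0 xs 0) (nth 1 xs 0)) -> mrec g1 -> mrec g2 ->
  mrec (fun xs => op (g1 xs) (g2 xs)).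
Proof. intros Ho H1 H2. exact (rec_comp _ [g1; g2] Ho ltac:(rec_list; auto)). Qed.

Lemma rec_lift4 (op : nat -> nat -> nat -> nat -> nat) g1 g2 g3 g4 :
  mrec (fun xs => op (nth 0 xs 0) (nth 1 xs 0) (nth 2 xs 0) (nth 3 xs 0)) ->
  mrec g1 -> mrec g2 -> mrec g3 -> mrec g4 ->
  mrec (fun xs => op (g1 xs) (g2 xs) (g3 xs) (g4 xs)).
Proof.
  intros Ho H1 H2 H3 H4.
  exact (rec_comp _ [g1; g2; g3; g4] Ho ltac:(rec_list; auto)).
Qed.

Fixpoint primrec (z s : list nat -> nat) (k : nat) (ps : list nat) : nat :=
  match k with 0 => z ps | S k => s (k :: primrec z s k ps :: ps) end.

Lemma rec_primrec z s cnt (gs : list (list nat -> nat)) :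
  mrec z -> mrec s -> mrec cnt -> List.Forall mrec gs ->
  mrec (fun xs => primrec z s (cnt xs) (map (fun g => g xs) gs)).
Proof.
  intros [pz Hz] [ps Hs] [pc Hc] [pgs Hgs]%rec_programs.
  assert (Hprim : forall k l, mu_eval (muPrim pz ps) (k :: l) (primrec z s k l)).
  { induction k; intros l; simpl; econstructor; eauto. }
  exists (muComp (muPrim pz ps) (pc :: pgs)). intros xs.
  econstructor; [constructor; auto | apply Hprim].
Qed.

Lemma rec_add g1 g2 : mrec g1 -> mrec g2 -> mrec (fun xs => g1 xs + g2 xs).
Proof.
  apply rec_lift2. eapply rec_ext.
  - apply (rec_primrec (fun ps => nth 0 ps 0) (fun ys => S (nth 1 ys 0))
             (fun xs => nth 0 xs 0) [fun xs => nth 1 xs 0]);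
      rec_list; auto using rec_proj, rec_succ.
  - intros xs; simpl. induction (nth 0 xs 0); simpl; auto.
Qed.

Lemma rec_mul g1 g2 : mrec g1 -> mrec g2 -> mrec (fun xs => g1 xs * g2 xs).
Proof.
  apply rec_lift2. eapply rec_ext.
  - apply (rec_primrec (fun _ => 0) (fun ys => nth 2 ys 0 + nth 1 ys 0)
             (fun xs => nth 0 xs 0) [fun xs => nth 1 xs 0]);
      rec_list; auto using rec_proj, rec_const, rec_add.
  - intros xs; simpl. induction (nth 0 xs 0); simpl; auto.
Qed.

Lemma rec_pred g : mrec g -> mrec (fun xs => pred (g xs)).
Proof.
  apply rec_lift1. eapply rec_ext.
  - apply (rec_primrec (fun _ => 0) (fun ys => nth 0 ys 0) (fun xs => nth 0 xs 0) []);
      rec_list; auto using rec_proj, rec_const.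
  - intros xs; simpl. destruct (nth 0 xs 0); reflexivity.
Qed.

Lemma rec_sub g1 g2 : mrec g1 -> mrec g2 -> mrec (fun xs => g1 xs - g2 xs).
Proof.
  apply rec_lift2. eapply rec_ext.
  - apply (rec_primrec (fun ps => nth 0 ps 0) (fun ys => pred (nth 1 ys 0))
             (fun xs => nth 1 xs 0) [fun xs => nth 0 xs 0]);
      rec_list; auto using rec_proj, rec_pred.
  - intros xs; simpl. induction (nth 1 xs 0) as [|k IH]; simpl; [lia|]. rewrite IH; lia.
Qed.

Lemma rec_pow g1 g2 : mrec g1 -> mrec g2 -> mrec (fun xs => g1 xs ^ g2 xs).
Proof.
  apply rec_lift2. eapply rec_ext.
  - apply (rec_primrec (fun _ => 1) (fun ys => nth 2 ys 0 * nth 1 ys 0)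
             (fun xs => nth 1 xs 0) [fun xs => nth 0 xs 0]);
      rec_list; auto using rec_proj, rec_const, rec_mul.
  - intros xs; simpl. induction (nth 1 xs 0); simpl; auto.
Qed.

Definition lebn (a b : nat) : nat := if a <=? b then 1 else 0.
Definition cond (c u v : nat) : nat := if c =? 0 then v else u.

Lemma rec_lebn g1 g2 : mrec g1 -> mrec g2 -> mrec (fun xs => lebn (g1 xs) (g2 xs)).
Proof.
  intros H1 H2. eapply rec_ext with (f := fun xs => 1 - (g1 xs - g2 xs)).
  - auto using rec_sub, rec_const.
  - intros xs. unfold lebn. destruct (Nat.leb_spec (g1 xs) (g2 xs)); lia.
Qed.

Lemma rec_cond g1 g2 g3 : mrec g1 -> mrec g2 -> mrec g3 ->
  mrec (fun xs => cond (g1 xs) (g2 xs) (g3 xs)).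
Proof.
  intros H1 H2 H3.
  eapply rec_ext with (f := fun xs => (1 - (1 - g1 xs)) * g2 xs + (1 - g1 xs) * g3 xs).
  - auto 7 using rec_add, rec_mul, rec_sub, rec_const.
  - intros xs. unfold cond. destruct (g1 xs); simpl; lia.
Qed.

Lemma rec_max g1 g2 : mrec g1 -> mrec g2 -> mrec (fun xs => Nat.max (g1 xs) (g2 xs)).
Proof.
  intros H1 H2. eapply rec_ext with (f := fun xs => g1 xs + (g2 xs - g1 xs)).
  - auto using rec_add, rec_sub.
  - intros xs; lia.
Qed.

Lemma rec_min g1 g2 : mrec g1 -> mrec g2 -> mrec (fun xs => Nat.min (g1 xs) (g2 xs)).
Proof.
  intros H1 H2. eapply rec_ext with (f := fun xs => g1 xs - (g1 xs - g2 xs)).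
  - auto using rec_sub.
  - intros xs; lia.
Qed.

Fixpoint sumf (F : nat -> nat) (k : nat) : nat :=
  match k with 0 => 0 | S k => sumf F k + F k end.

Lemma map_nth_seq {X : Type} (d : X) (ps : list X) :
  map (fun i => nth i ps d) (seq 0 (length ps)) = ps.
Proof.
  induction ps as [|p ps IH]; simpl; f_equal.
  rewrite <- seq_shift, map_map. exact IH.
Qed.

(* The recursion step receives [k :: acc :: ps]; as the parameter list [ps] has the
   fixed length [length gs], it is recovered by finitely many projections. *)
Lemma rec_sum (F : list nat -> nat) u (gs : list (list nat -> nat)) :
  mrec F -> mrec u -> List.Forall mrec gs ->
  mrec (fun xs => sumf (fun i => F (i :: map (fun g => g xs) gs)) (u xs)).
Proof.
  intros HF Hu Hgs. set (m := length gs).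
  set (args := fun ys : list nat => nth 0 ys 0 :: map (fun j => nth (2 + j) ys 0) (seq 0 m)).
  assert (HFargs : mrec (fun ys => F (args ys))).
  { eapply rec_ext.
    - apply (rec_comp F ((fun ys => nth 0 ys 0) :: map (fun j ys => nth (2 + j) ys 0) (seq 0 m))
               HF).
      constructor; [apply rec_proj|]. apply Forall_map, Forall_forall; intros; apply rec_proj.
    - intros ys; unfold args; simpl; rewrite map_map; reflexivity. }
  eapply rec_ext.
  - apply (rec_primrec (fun _ => 0) (fun ys => nth 1 ys 0 + F (args ys)) u gs);
      auto using rec_const, rec_add, rec_proj.
  - intros xs; cbv beta. induction (u xs) as [|k IH]; [reflexivity|].
    simpl. rewrite IH. do 3 f_equal. unfold args, m; simpl. f_equal.
    rewrite <- (length_map (fun g => g xs)). apply map_nth_seq.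
Qed.

(* Counting the indices below [c] that lie below a threshold [d] gives [min d c];
   this computes both integer division and the length of a coded string. *)
Lemma sumf_threshold (F : nat -> nat) d c :
  (forall j, j < c -> F j = if j <? d then 1 else 0) -> sumf F c = Nat.min d c.
Proof.
  induction c as [|c IH]; intros HF; simpl; [lia|].
  rewrite IH, HF by auto. destruct (Nat.ltb_spec c d); lia.
Qed.

(* For [b > 0], [a / b] counts the [j < a] with [(j + 1) * b <= a]. *)
Lemma rec_div g1 g2 : mrec g1 -> mrec g2 -> mrec (fun xs => g1 xs / g2 xs).
Proof.
  apply rec_lift2. eapply rec_ext.
  - apply (rec_cond (fun xs => nth 1 xs 0)
      (fun xs => sumf (fun j => lebn ((j + 1) * nth 1 xs 0) (nth 0 xs 0)) (nth 0 xs 0))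
      (fun _ => 0));
      [apply rec_proj| |apply rec_const].
    apply (rec_sum (fun ys => lebn ((nth 0 ys 0 + 1) * nth 1 ys 0) (nth 2 ys 0)) _
             [fun xs => nth 1 xs 0; fun xs => nth 0 xs 0]);
      rec_list; auto using rec_lebn, rec_mul, rec_add, rec_proj, rec_const.
  - intros xs. unfold cond. set (a := nth 0 xs 0); set (b := nth 1 xs 0).
    destruct (Nat.eqb_spec b 0) as [->|Hb]; [destruct a; reflexivity|].
    rewrite (sumf_threshold _ (a / b)).
    + apply Nat.min_l, Nat.Div0.div_le_upper_bound. nia.
    + intros j _. unfold lebn. destruct (Nat.ltb_spec j (a / b)) as [H|H].
      * replace ((j + 1) * b <=? a) with true; [reflexivity|symmetry; apply Nat.leb_le].
        pose proof (Nat.Div0.mul_div_le a b). nia.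
      * replace ((j + 1) * b <=? a) with false; [reflexivity|symmetry; apply Nat.leb_gt].
        pose proof (Nat.mod_upper_bound a b Hb). pose proof (Nat.div_mod a b Hb). nia.
Qed.

Lemma rec_mod g1 g2 : mrec g1 -> mrec g2 -> mrec (fun xs => g1 xs mod g2 xs).
Proof.
  intros H1 H2. eapply rec_ext with (f := fun xs => g1 xs - g2 xs * (g1 xs / g2 xs)).
  - auto using rec_sub, rec_mul, rec_div.
  - intros xs. pose proof (Nat.div_mod_eq (g1 xs) (g2 xs)). lia.
Qed.

Lemma rec_recursive2 f g1 g2 :
  recursive2 f -> mrec g1 -> mrec g2 -> mrec (fun xs => f (g1 xs) (g2 xs)).
Proof.
  intros [p Hp]. apply rec_lift2. exists (muComp p [muProj 0; muProj 1]). intros xs.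
  econstructor; [repeat constructor | apply Hp].
Qed.

Lemma recursive2_rec f : mrec (fun xs => f (nth 0 xs 0) (nth 1 xs 0)) -> recursive2 f.
Proof. intros [p Hp]. exists p. intros x y. apply (Hp [x; y]). Qed.

Ltac rec_closure := repeat first
  [ apply Forall_nil | apply Forall_cons
  | apply rec_proj | apply rec_const | apply rec_succ | apply rec_add | apply rec_sub
  | apply rec_mul | apply rec_pow | apply rec_div | apply rec_mod | apply rec_min
  | apply rec_max | apply rec_lebn | apply rec_cond
  | (apply rec_recursive2; [assumption | | ]) ].

(* The code of [s ++ [x]] is obtained from that of [s] knowing only [length s],
   which is itself determined by the code through [bcode_bounds]. *)
Lemma bcode_app s (x : bool) :
  bcode (s ++ [x]) = bcode s + 2 ^ length s * (1 + (if x then 1 else 0)).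
Proof. induction s as [|b s IH]; simpl; [destruct x|rewrite IH; destruct b, x]; simpl; lia. Qed.

Lemma bcode_bounds s : 2 ^ length s <= bcode s + 1 < 2 ^ S (length s).
Proof. induction s as [|b s IH]; simpl; [|destruct b; simpl in *]; lia. Qed.

Definition code_length (c : nat) : nat := sumf (fun j => lebn (2 ^ (j + 1)) (c + 1)) c.

Definition child (c x : nat) : nat := c + 2 ^ code_length c * (1 + x).

Lemma code_length_bcode s : code_length (bcode s) = length s.
Proof.
  destruct (bcode_bounds s) as [Hlo Hhi]. pose proof (Nat.pow_gt_lin_r 2 (length s)).
  unfold code_length. rewrite (sumf_threshold _ (length s)); [lia|].
  intros j _. unfold lebn. destruct (Nat.ltb_spec j (length s)).
  - replace (2 ^ (j + 1) <=? bcode s + 1) with true; [reflexivity|symmetry; apply Nat.leb_le].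
    pose proof (Nat.pow_le_mono_r 2 (j + 1) (length s)). lia.
  - replace (2 ^ (j + 1) <=? bcode s + 1) with false; [reflexivity|symmetry; apply Nat.leb_gt].
    pose proof (Nat.pow_le_mono_r 2 (S (length s)) (j + 1)). lia.
Qed.

Lemma child_bcode s (x : bool) : child (bcode s) (if x then 1 else 0) = bcode (s ++ [x]).
Proof. unfold child. rewrite code_length_bcode, bcode_app. reflexivity. Qed.

Lemma rec_code_length g : mrec g -> mrec (fun xs => code_length (g xs)).
Proof.
  apply rec_lift1. eapply rec_ext.
  - apply (rec_sum (fun ys => lebn (2 ^ (nth 0 ys 0 + 1)) (nth 1 ys 0 + 1))
             (fun xs => nth 0 xs 0) [fun xs => nth 0 xs 0]);
      rec_closure.
  - reflexivity.
Qed.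

(* Base-[B] digits: a single number stores a finite table [v 0, ..., v (C-1)] of
   values below [B]. *)
Definition digit (B T i : nat) : nat := T / B ^ i mod B.

Lemma digit_sum B (v : nat -> nat) C : 1 < B -> (forall c, c < C -> v c < B) ->
  sumf (fun c => v c * B ^ c) C < B ^ C /\
  forall i, i < C -> digit B (sumf (fun c => v c * B ^ c) C) i = v i.
Proof.
  intros HB. induction C as [|C IH]; intros Hv; simpl; [split; lia|].
  destruct IH as [Hlt Hdig]; [intros; apply Hv; lia|].
  assert (HvC : v C * B ^ C <= (B - 1) * B ^ C)
    by (apply Nat.mul_le_mono_r; specialize (Hv C); lia).
  split; [nia|]. intros i Hi. unfold digit.
  assert (HBi : B ^ i <> 0) by (apply Nat.pow_nonzero; lia).
  destruct (Nat.eq_dec i C) as [->|Hne].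
  - rewrite Nat.div_add, Nat.div_small by auto. apply Nat.mod_small, Hv. lia.
  - replace (v C * B ^ C) with ((v C * B ^ (C - i - 1)) * B * B ^ i).
    + rewrite Nat.div_add, Nat.Div0.mod_add by auto. apply Hdig. lia.
    + rewrite <- (Nat.pow_1_r B) at 2. rewrite <- !Nat.mul_assoc, <- !Nat.pow_add_r.
      do 2 f_equal. lia.
Qed.

(* Integer arithmetic at precision [2 ^ K]: a probability [p] is represented by a
   natural number close to [p * 2 ^ K]. *)
Definition scaled_rat (K a b c : nat) : nat := Nat.min (2 ^ K) ((a - b) * 2 ^ K / S c).

Definition iexp (K p f0 f1 : nat) : nat := ((2 ^ K - p) * f0 + p * f1) / 2 ^ K.

Definition node_val (K lo hi h f0 f1 : nat) : nat :=
  cond h (2 ^ K) (Nat.max (iexp K lo f0 f1) (iexp K hi f0 f1)).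

Fixpoint int_value (lo hi hit : bstr -> nat) (K k : nat) (s : bstr) : nat :=
  match k with
  | 0 => 0
  | S k => node_val K (lo s) (hi s) (hit s)
             (int_value lo hi hit K k (s ++ [false])) (int_value lo hi hit K k (s ++ [true]))
  end.

Lemma iexp_le K p f0 f1 : p <= 2 ^ K -> f0 <= 2 ^ K -> f1 <= 2 ^ K -> iexp K p f0 f1 <= 2 ^ K.
Proof.
  intros. pose proof (Nat.pow_nonzero 2 K ltac:(lia)).
  apply Nat.Div0.div_le_upper_bound. nia.
Qed.

Lemma node_val_le K lo hi h f0 f1 : lo <= 2 ^ K -> hi <= 2 ^ K -> f0 <= 2 ^ K -> f1 <= 2 ^ K ->
  node_val K lo hi h f0 f1 <= 2 ^ K.
Proof. intros. unfold node_val, cond. destruct (h =? 0); auto using Nat.max_lub, iexp_le. Qed.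

(* The backward induction up to depth [l] is carried out on a single number: the
   values at all codes [c < 2 ^ (l + 1)] are stored as base-[2 ^ K + 1] digits. *)
Section Table.
Variables (lo hi : nat -> nat -> nat) (hit : nat -> nat -> nat).
Hypotheses (Hlo : forall c K, lo c K <= 2 ^ K) (Hhi : forall c K, hi c K <= 2 ^ K).

Definition table_entry (n K T c : nat) : nat :=
  node_val K (lo c K) (hi c K) (hit n c)
    (digit (2 ^ K + 1) T (child c 0)) (digit (2 ^ K + 1) T (child c 1)).

Definition table_step (n l K T : nat) : nat :=
  sumf (fun c => table_entry n K T c * (2 ^ K + 1) ^ c) (2 ^ (l + 1)).

Fixpoint table (n l K k : nat) : nat :=
  match k with 0 => 0 | S k => table_step n l K (table n l K k) end.

Lemma digit_le K T i : digit (2 ^ K + 1) T i <= 2 ^ K.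
Proof. unfold digit. pose proof (Nat.mod_upper_bound (T / (2 ^ K + 1) ^ i) (2 ^ K + 1)). lia. Qed.

Lemma table_correct n l K k s : length s + k <= l ->
  digit (2 ^ K + 1) (table n l K k) (bcode s) =
  int_value (fun s => lo (bcode s) K) (fun s => hi (bcode s) K) (fun s => hit n (bcode s)) K k s.
Proof.
  revert s; induction k as [|k IH]; intros s Hs; simpl.
  - unfold digit. rewrite Nat.Div0.div_0_l. apply Nat.Div0.mod_0_l.
  - assert (HB : 1 < 2 ^ K + 1) by (pose proof (Nat.pow_nonzero 2 K); lia).
    assert (Hcode : bcode s < 2 ^ (l + 1)).
    { destruct (bcode_bounds s). pose proof (Nat.pow_le_mono_r 2 (S (length s)) (l + 1)). lia. }
    assert (Hentry : forall c, c < 2 ^ (l + 1) -> table_entry n K (table n l K k) c < 2 ^ K + 1).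
    { intros c _. unfold table_entry.
      pose proof (node_val_le K _ _ (hit n c) _ _ (Hlo c K) (Hhi c K)
        (digit_le K (table n l K k) (child c 0)) (digit_le K (table n l K k) (child c 1))).
      lia. }
    unfold table_step. rewrite (proj2 (digit_sum _ _ _ HB Hentry)) by exact Hcode.
    unfold table_entry. rewrite (child_bcode s false), (child_bcode s true).
    rewrite !IH by (rewrite length_app; simpl; lia). reflexivity.
Qed.

Hypotheses (Rlo : recursive2 lo) (Rhi : recursive2 hi) (Rhit : recursive2 hit).

Lemma rec_table_entry g1 g2 g3 g4 : mrec g1 -> mrec g2 -> mrec g3 -> mrec g4 ->
  mrec (fun xs => table_entry (g1 xs) (g2 xs) (g3 xs) (g4 xs)).
Proof.
  apply rec_lift4. unfold table_entry, node_val, iexp, digit.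
  rec_closure; apply rec_code_length; rec_closure.
Qed.

(* [table] is a primitive recursion over [k] whose step receives
   [k :: T :: n :: l :: K]. *)
Lemma rec_table : mrec (fun xs => table (nth 0 xs 0) (nth 1 xs 0) (nth 2 xs 0) (nth 3 xs 0)).
Proof.
  assert (Hstep : mrec (fun ys => table_step (nth 2 ys 0) (nth 3 ys 0) (nth 4 ys 0) (nth 1 ys 0))).
  { eapply rec_ext.
    - apply (rec_sum (fun zs => table_entry (nth 1 zs 0) (nth 2 zs 0) (nth 3 zs 0) (nth 0 zs 0)
                                * (2 ^ nth 2 zs 0 + 1) ^ nth 0 zs 0)
               (fun ys => 2 ^ (nth 3 ys 0 + 1))
               [fun ys => nth 2 ys 0; fun ys => nth 4 ys 0; fun ys => nth 1 ys 0]);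
        [apply rec_mul; [apply rec_table_entry|] | |]; rec_closure.
    - reflexivity. }
  eapply rec_ext.
  - apply (rec_primrec (fun _ => 0) _ (fun xs => nth 3 xs 0)
             [fun xs => nth 0 xs 0; fun xs => nth 1 xs 0; fun xs => nth 2 xs 0]
             (rec_const 0) Hstep);
      rec_closure.
  - intros xs; cbv beta.
    induction (nth 3 xs 0) as [|k IH]; simpl in *; [reflexivity | now rewrite IH].
Qed.
End Table.

Open Scope R_scope.

Lemma flo_bounds phi s : 0 <= flo phi s <= 1.
Proof. destruct (f_ok phi s) as [? [? ?]]. lra. Qed.

Lemma fhi_bounds phi s : 0 <= fhi phi s <= 1.
Proof. destruct (f_ok phi s) as [? [? ?]]. lra. Qed.

Definition feasible (phi : forecast) (G : path -> Prop) (M : bstr -> R) : Prop :=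
  supermartingale phi M /\
  forall w, Rbar_le (Finite (indic G w)) (LimInf_seq (fun n => M (prefix w n))).

Lemma liminf_le_eventually (u : nat -> R) (c : R) m0 :
  (forall m, (m0 <= m)%nat -> u m <= c) -> Rbar_le (LimInf_seq u) (Finite c).
Proof. intros H. rewrite <- (LimInf_seq_const c). apply LimInf_le. exists m0. auto. Qed.

Lemma liminf_ge_eventually (u : nat -> R) (c : R) m0 :
  (forall m, (m0 <= m)%nat -> c <= u m) -> Rbar_le (Finite c) (LimInf_seq u).
Proof. intros H. rewrite <- (LimInf_seq_const c). apply LimInf_le. exists m0. auto. Qed.

Lemma indic_in G w : G w -> indic G w = 1.
Proof. intros H. unfold indic. destruct excluded_middle_informative; tauto. Qed.

Lemma indic_out G w : ~ G w -> indic G w = 0.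
Proof. intros H. unfold indic. destruct excluded_middle_informative; tauto. Qed.

Lemma indic_nonneg G w : 0 <= indic G w.
Proof. unfold indic. destruct excluded_middle_informative; lra. Qed.

Lemma prefix_S w m : prefix w (S m) = prefix w m ++ [w m].
Proof. unfold prefix. rewrite seq_S, map_app. reflexivity. Qed.

Lemma prefix_extends w m k : exists u, prefix w (m + k) = prefix w m ++ u.
Proof.
  induction k as [|k [u Hu]].
  - exists []. rewrite Nat.add_0_r, app_nil_r. reflexivity.
  - exists (u ++ [w (m + k)%nat]). rewrite Nat.add_succ_r, prefix_S, Hu, app_assoc. reflexivity.
Qed.

Lemma supermartingale_descent phi M s : supermartingale phi M ->
  exists b, M (s ++ [b]) <= M s.
Proof.
  intros HM. destruct (f_ok phi s) as [Hp0 [Hp1 Hp2]].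
  specialize (HM s (flo phi s) ltac:(lra)). simpl in HM.
  destruct (Rle_dec (M (s ++ [true])) (M s)); [eauto|].
  destruct (Rle_dec (M (s ++ [false])) (M s)); [eauto|].
  exfalso. destruct (Rle_dec (flo phi s) (1 / 2)); nra.
Qed.

Lemma infinite_branch (next : bstr -> bstr) s :
  (forall t, exists b, next t = t ++ [b]) ->
  exists w : path, forall j, prefix w (length s + j) = Nat.iter j next s.
Proof.
  intros Hnext. set (str := fun j => Nat.iter j next s).
  assert (Hext : forall j k, exists u, str (j + k)%nat = str j ++ u).
  { intros j k. induction k as [|k [u Hu]].
    - exists []. rewrite Nat.add_0_r, app_nil_r. reflexivity.
    - destruct (Hnext (str (j + k)%nat)) as [b Hb]. exists (u ++ [b]).
      rewrite Nat.add_succ_r. change (next (str (j + k)%nat) = str j ++ u ++ [b]).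
      rewrite Hb, Hu, app_assoc. reflexivity. }
  assert (Hlen : forall j, length (str j) = (length s + j)%nat).
  { induction j as [|j IH]; [simpl; lia|].
    destruct (Hnext (str j)) as [b Hb]. change (length (next (str j)) = (length s + S j)%nat).
    rewrite Hb, length_app, IH. simpl. lia. }
  assert (Hagree : forall i j k, (i < length s + j)%nat -> (j <= k)%nat ->
                     nth i (str k) false = nth i (str j) false).
  { intros i j k Hi Hjk. destruct (Hext j (k - j)%nat) as [u Hu].
    replace k with (j + (k - j))%nat by lia. rewrite Hu, app_nth1 by (rewrite Hlen; lia).
    reflexivity. }
  exists (fun i => nth i (str (S i)) false). intros j.
  change (prefix (fun i => nth i (str (S i)) false) (length s + j) = str j).
  rewrite <- (map_nth_seq false (str j)), Hlen. unfold prefix. apply map_ext_in.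
  intros i Hi%in_seq. destruct (Nat.le_ge_cases (S i) j).
  - symmetry. apply Hagree; lia.
  - apply Hagree; lia.
Qed.

(* Following non-increasing children from [s] gives a path through [s] along which
   the supermartingale stays below [M s]. *)
Lemma descending_path phi M s : supermartingale phi M ->
  exists w, cyl s w /\ forall m, (length s <= m)%nat -> M (prefix w m) <= M s.
Proof.
  intros HM.
  set (next := fun t : bstr =>
    if Rle_dec (M (t ++ [true])) (M t) then t ++ [true] else t ++ [false]).
  assert (Hnext : forall t, M (next t) <= M t /\ exists b, next t = t ++ [b]).
  { intros t. unfold next. destruct Rle_dec as [H|H]; [split; eauto|].
    destruct (supermartingale_descent phi M t HM) as [[|] Hb]; [contradiction|split; eauto]. }
  destruct (infinite_branch next s (fun t => proj2 (Hnext t))) as [w Hw].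
  assert (Hdec : forall j, M (Nat.iter j next s) <= M s).
  { induction j as [|j IH]; simpl; [lra|]. pose proof (proj1 (Hnext (Nat.iter j next s))). lra. }
  exists w. split.
  - unfold cyl. rewrite <- (Nat.add_0_r (length s)), Hw. reflexivity.
  - intros m Hm. replace m with (length s + (m - length s))%nat by lia. rewrite Hw. apply Hdec.
Qed.

Lemma feasible_nonneg phi G M s : feasible phi G M -> 0 <= M s.
Proof.
  intros [HM Hl]. destruct (descending_path phi M s HM) as [w [_ Hw]].
  specialize (Hl w). pose proof (liminf_le_eventually _ _ _ Hw). pose proof (indic_nonneg G w).
  destruct (LimInf_seq (fun n => M (prefix w n))); simpl in *; lra.
Qed.

Lemma feasible_ge1 phi G M s : feasible phi G M -> (forall w, cyl s w -> G w) -> 1 <= M s.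
Proof.
  intros [HM Hl] HG. destruct (descending_path phi M s HM) as [w [Hc Hw]].
  specialize (Hl w). rewrite indic_in in Hl by auto. pose proof (liminf_le_eventually _ _ _ Hw).
  destruct (LimInf_seq (fun n => M (prefix w n))); simpl in *; lra.
Qed.

Lemma feasible_mono phi G G' M : feasible phi G M -> (forall w, G' w -> G w) -> feasible phi G' M.
Proof.
  intros [HS HL] Hsub. split; auto. intros w. eapply Rbar_le_trans; [|apply HL].
  simpl. destruct (classic (G' w)).
  - rewrite !indic_in; auto. lra.
  - rewrite indic_out by auto. apply indic_nonneg.
Qed.

Lemma feasible_sum phi G G1 G2 M1 M2 :
  feasible phi G1 M1 -> feasible phi G2 M2 -> (forall w, G w -> G1 w \/ G2 w) ->
  feasible phi G (fun s => M1 s + M2 s).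
Proof.
  intros H1 H2 HG. pose proof (fun s => feasible_nonneg _ _ _ s H1) as N1.
  pose proof (fun s => feasible_nonneg _ _ _ s H2) as N2.
  destruct H1 as [S1 L1], H2 as [S2 L2]. split.
  - intros s p Hp. specialize (S1 s p Hp). specialize (S2 s p Hp). simpl in *. lra.
  - intros w. destruct (classic (G w)) as [h|h].
    + rewrite indic_in by auto. destruct (HG w h) as [g|g].
      * specialize (L1 w). rewrite indic_in in L1 by auto. eapply Rbar_le_trans; [apply L1|].
        apply LimInf_le. exists 0%nat. intros m _. specialize (N2 (prefix w m)). lra.
      * specialize (L2 w). rewrite indic_in in L2 by auto. eapply Rbar_le_trans; [apply L2|].
        apply LimInf_le. exists 0%nat. intros m _. specialize (N1 (prefix w m)). lra.
    + rewrite indic_out by auto. apply (liminf_ge_eventually _ _ 0). intros m _.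
      specialize (N1 (prefix w m)). specialize (N2 (prefix w m)). lra.
Qed.

Lemma upper_prob_glb phi G :
  is_glb_Rbar (fun v => exists M, feasible phi G M /\ v = M []) (upper_prob phi G).
Proof.
  eapply is_glb_Rbar_eqset; [|apply Glb_Rbar_correct].
  intros v. unfold feasible. split; [intros [M [[H1 H2] H3]] | intros [M [H1 [H2 H3]]]]; eauto.
Qed.

Lemma upper_prob_le phi G M : feasible phi G M -> Rbar_le (upper_prob phi G) (Finite (M [])).
Proof. intros HM. apply (upper_prob_glb phi G). eauto. Qed.

Lemma upper_prob_ge phi G x : (forall M, feasible phi G M -> x <= M []) ->
  Rbar_le (Finite x) (upper_prob phi G).
Proof. intros H. apply (upper_prob_glb phi G). intros v [M [HM ->]]. apply H, HM. Qed.

Lemma upper_prob_mono phi G G' : (forall w, G' w -> G w) ->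
  Rbar_le (upper_prob phi G') (upper_prob phi G).
Proof.
  intros Hsub. eapply is_glb_Rbar_subset; [|apply upper_prob_glb..].
  intros v [M [HM ->]]. eauto using feasible_mono.
Qed.

Lemma upper_prob_eq phi G M : feasible phi G M -> (forall M', feasible phi G M' -> M [] <= M' []) ->
  upper_prob phi G = Finite (M []).
Proof.
  intros HM Hmin. pose proof (upper_prob_le phi G M HM). pose proof (upper_prob_ge phi G _ Hmin).
  destruct (upper_prob phi G); simpl in *; try contradiction. f_equal. lra.
Qed.

Lemma upper_prob_approx phi G b eps : Rbar_le (upper_prob phi G) (Finite b) -> 0 < eps ->
  exists M, feasible phi G M /\ M [] <= b + eps.
Proof.
  intros Hb He. apply NNPP. intros Hn.
  assert (Rbar_le (Finite (b + eps)) (upper_prob phi G)).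
  { apply upper_prob_ge. intros M HM. apply Rnot_lt_le. intros Hlt.
    apply Hn. exists M. split; auto. lra. }
  destruct (upper_prob phi G); simpl in *; lra.
Qed.

Lemma Rbar_le_of_eps (x : Rbar) (c : R) :
  (forall eps, 0 < eps -> Rbar_le x (Finite (c + eps))) -> Rbar_le x (Finite c).
Proof.
  intros H. destruct x as [y| |]; simpl; auto.
  - apply Rnot_lt_le. intros Hlt. specialize (H ((y - c) / 2) ltac:(lra)). simpl in H. lra.
  - apply (H 1 Rlt_0_1).
Qed.

(* Subadditivity, by adding nearly optimal supermartingales for the two parts. *)
Lemma upper_prob_subadditive phi G G1 G2 a b :
  (forall w, G w -> G1 w \/ G2 w) ->
  Rbar_le (upper_prob phi G1) (Finite a) -> Rbar_le (upper_prob phi G2) (Finite b) ->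
  Rbar_le (upper_prob phi G) (Finite (a + b)).
Proof.
  intros HG Ha Hb. apply Rbar_le_of_eps. intros eps Heps.
  destruct (upper_prob_approx _ _ _ (eps / 2) Ha ltac:(lra)) as [M1 [HM1 Hv1]].
  destruct (upper_prob_approx _ _ _ (eps / 2) Hb ltac:(lra)) as [M2 [HM2 Hv2]].
  eapply Rbar_le_trans; [apply (upper_prob_le phi G _ (feasible_sum _ _ _ _ _ _ HM1 HM2 HG))|].
  simpl. lra.
Qed.

(* The upper expectation of [(f0, f1)] over the interval [[lo, hi]]: the maximum of
   a linear function of [p] is attained at an endpoint. *)
Definition uexp (lo hi f0 f1 : R) : R :=
  Rmax (lo * f1 + (1 - lo) * f0) (hi * f1 + (1 - hi) * f0).

Lemma uexp_ge lo hi f0 f1 p : lo <= p <= hi -> p * f1 + (1 - p) * f0 <= uexp lo hi f0 f1.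
Proof.
  intros Hp. unfold uexp. destruct (Rle_dec f0 f1).
  - eapply Rle_trans; [|apply Rmax_r]. nra.
  - eapply Rle_trans; [|apply Rmax_l]. nra.
Qed.

Lemma uexp_bounds lo hi f0 f1 : 0 <= lo <= 1 -> 0 <= hi <= 1 -> 0 <= f0 <= 1 -> 0 <= f1 <= 1 ->
  0 <= uexp lo hi f0 f1 <= 1.
Proof.
  intros. unfold uexp. split.
  - eapply Rle_trans; [|apply Rmax_l]. nra.
  - apply Rmax_lub; nra.
Qed.

(* For the finite-horizon event [[A_n^{<l}]], backward induction computes the upper
   probability exactly: the value [game_value k s] of the [k]-step game from [s] is
   a lower bound for every feasible supermartingale, and it is attained by [opt]. *)
Section FiniteHorizon.
Variables (phi : forecast) (A : nat -> bstr -> bool) (n l : nat).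

Fixpoint game_value (k : nat) (s : bstr) : R :=
  match k with
  | O => 0
  | S k => if A n s then 1
           else uexp (flo phi s) (fhi phi s)
                  (game_value k (s ++ [false])) (game_value k (s ++ [true]))
  end.

Lemma game_value_bounds k s : 0 <= game_value k s <= 1.
Proof.
  revert s; induction k; intros s; simpl; [lra|]. destruct (A n s); [lra|].
  destruct (f_ok phi s) as [? [? ?]]. apply uexp_bounds; auto; lra.
Qed.

Definition horizon_event : path -> Prop := cylset (An_lt A n l).

Lemma game_value_le M : feasible phi horizon_event M ->
  forall k s, (length s + k = l)%nat -> game_value k s <= M s.
Proof.
  intros HM. induction k as [|k IH]; intros s Hs; simpl.
  - eapply feasible_nonneg; eauto.
  - destruct (A n s) eqn:EA.
    + eapply feasible_ge1; eauto. intros w Hw. exists s. repeat split; auto. lia.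
    + assert (H0 := IH (s ++ [false]) ltac:(rewrite length_app; simpl; lia)).
      assert (H1 := IH (s ++ [true]) ltac:(rewrite length_app; simpl; lia)).
      destruct HM as [HS _]. destruct (f_ok phi s) as [? [? ?]].
      apply Rmax_lub.
      * eapply Rle_trans; [|apply (HS s (flo phi s)); lra]. simpl. nra.
      * eapply Rle_trans; [|apply (HS s (fhi phi s)); lra]. simpl. nra.
Qed.

Definition extends_hit (s : bstr) : Prop :=
  exists t u, A n t = true /\ (length t < l)%nat /\ s = t ++ u.

Definition opt (s : bstr) : R :=
  if excluded_middle_informative (extends_hit s) then 1
  else if (length s <=? l)%nat then game_value (l - length s) s else 0.

Lemma extends_hit_app s x : extends_hit s -> extends_hit (s ++ [x]).
Proof. intros [t [u [H1 [H2 ->]]]]. exists t, (u ++ [x]). rewrite app_assoc. auto. Qed.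

Lemma extends_hit_child s x : extends_hit (s ++ [x]) -> ~ extends_hit s ->
  A n (s ++ [x]) = true /\ (length (s ++ [x]) < l)%nat.
Proof.
  intros [t [u [H1 [H2 H3]]]] Hn. destruct u as [|y u'] using rev_ind.
  - rewrite app_nil_r in H3. subst. auto.
  - rewrite app_assoc in H3. apply app_inj_tail in H3. destruct H3 as [H3 _].
    exfalso. apply Hn. exists t, u'. auto.
Qed.

Lemma opt_nonneg s : 0 <= opt s.
Proof.
  unfold opt. destruct excluded_middle_informative; [lra|].
  destruct (length s <=? l)%nat; [apply game_value_bounds|lra].
Qed.

Lemma opt_child s x : ~ extends_hit s -> (length s < l)%nat -> A n s = false ->
  opt (s ++ [x]) = game_value (l - length s - 1) (s ++ [x]).
Proof.
  intros Hn Hl HA. unfold opt. rewrite length_app. simpl.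
  destruct excluded_middle_informative as [h|h].
  - destruct (extends_hit_child s x h Hn) as [H1 H2]. rewrite length_app in H2. simpl in H2.
    replace (l - length s - 1)%nat with (S (l - length s - 2)) by lia. simpl. rewrite H1. auto.
  - replace (length s + 1 <=? l)%nat with true by (symmetry; apply Nat.leb_le; lia). f_equal. lia.
Qed.

Lemma opt_supermartingale : supermartingale phi opt.
Proof.
  intros s p Hp. simpl. destruct (f_ok phi s) as [? [? ?]].
  destruct (excluded_middle_informative (extends_hit s)) as [h|h].
  - assert (Hone : forall t, extends_hit t -> opt t = 1).
    { intros t Ht. unfold opt. destruct excluded_middle_informative; tauto. }
    rewrite !Hone by auto using extends_hit_app. lra.
  - destruct (Nat.lt_ge_cases (length s) l) as [Hl|Hl].
    + assert (HA : A n s = false).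
      { destruct (A n s) eqn:E; auto. exfalso. apply h. exists s, []. rewrite app_nil_r. auto. }
      rewrite (opt_child s true), (opt_child s false) by auto. unfold opt at 1.
      destruct excluded_middle_informative; [contradiction|].
      replace (length s <=? l)%nat with true by (symmetry; apply Nat.leb_le; lia).
      assert (E : (l - length s = S (l - length s - 1))%nat) by lia.
      set (k := (l - length s - 1)%nat) in *. rewrite E. simpl. rewrite HA.
      apply uexp_ge. lra.
    + assert (Hzero : forall x, opt (s ++ [x]) = 0).
      { intros x. unfold opt. destruct excluded_middle_informative as [h'|h'].
        - destruct (extends_hit_child s x h' h) as [_ H2].
          rewrite length_app in H2. simpl in H2. lia.
        - rewrite length_app. simpl. replace (length s + 1 <=? l)%nat with false; auto.
          symmetry. apply Nat.leb_gt. lia. }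
      rewrite !Hzero. pose proof (opt_nonneg s). lra.
Qed.

Lemma opt_feasible : feasible phi horizon_event opt.
Proof.
  split; [apply opt_supermartingale|]. intros w.
  destruct (classic (horizon_event w)) as [h|h].
  - rewrite indic_in by auto. destruct h as [t [[H1 H2] H3]].
    apply (liminf_ge_eventually _ _ (length t)). intros m Hm.
    unfold opt. destruct excluded_middle_informative as [_|c]; [lra|]. exfalso. apply c.
    destruct (prefix_extends w (length t) (m - length t)) as [u Hu].
    replace (length t + (m - length t))%nat with m in Hu by lia.
    exists t, u. unfold cyl in H3. rewrite H3 in Hu. auto.
  - rewrite indic_out by auto. apply (liminf_ge_eventually _ _ 0). intros; apply opt_nonneg.
Qed.

Lemma opt_nil : opt [] = game_value l [].
Proof.
  unfold opt. destruct excluded_middle_informative as [h|h].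
  - destruct h as [t [u [H1 [H2 H3]]]]. symmetry in H3. apply app_eq_nil in H3. destruct H3; subst.
    destruct l; simpl in *; [lia|]. rewrite H1. auto.
  - simpl. rewrite Nat.sub_0_r. auto.
Qed.

Lemma upper_prob_horizon : upper_prob phi horizon_event = Finite (game_value l []).
Proof.
  rewrite <- opt_nil. apply upper_prob_eq; [apply opt_feasible|].
  intros M HM. rewrite opt_nil. apply (game_value_le M HM l []). reflexivity.
Qed.
End FiniteHorizon.

Lemma INR_pow2 K : INR (2 ^ K) = 2 ^ K.
Proof. rewrite pow_INR. replace (INR 2) with 2 by (simpl; lra). reflexivity. Qed.

Lemma INR_max a b : INR (Nat.max a b) = Rmax (INR a) (INR b).
Proof.
  destruct (Nat.le_ge_cases a b).
  - rewrite Nat.max_r, Rmax_right by (auto; apply le_INR; auto). reflexivity.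
  - rewrite Nat.max_l, Rmax_left by (auto; apply le_INR; auto). reflexivity.
Qed.

Lemma INR_min a b : INR (Nat.min a b) = Rmin (INR a) (INR b).
Proof.
  destruct (Nat.le_ge_cases a b).
  - rewrite Nat.min_l, Rmin_left by (auto; apply le_INR; auto). reflexivity.
  - rewrite Nat.min_r, Rmin_right by (auto; apply le_INR; auto). reflexivity.
Qed.

Lemma INR_sub_trunc a b : INR (a - b) = Rmax (INR a - INR b) 0.
Proof.
  destruct (Nat.le_ge_cases b a).
  - rewrite minus_INR, Rmax_left by (auto; apply le_INR in H; lra). reflexivity.
  - replace (a - b)%nat with 0%nat by lia. rewrite Rmax_right; [reflexivity|].
    apply le_INR in H. lra.
Qed.

Lemma INR_div_floor a d : (0 < d)%nat -> INR a / INR d - 1 < INR (a / d) <= INR a / INR d.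
Proof.
  intros Hd. pose proof (Nat.div_mod a d ltac:(lia)) as H.
  pose proof (Nat.mod_upper_bound a d ltac:(lia)) as H2.
  apply (f_equal INR) in H. rewrite plus_INR, mult_INR in H.
  apply lt_INR in H2. pose proof (pos_INR (a mod d)). pose proof (lt_0_INR d Hd).
  assert (Hfrac : INR a / INR d = INR (a / d) + INR (a mod d) / INR d) by (rewrite H; field; lra).
  assert (0 <= INR (a mod d) / INR d < 1).
  { split; [apply Rdiv_le_0_compat; lra|]. apply Rmult_lt_reg_r with (INR d); [lra|].
    unfold Rdiv. rewrite Rmult_assoc, Rinv_l, Rmult_1_r, Rmult_1_l by lra. lra. }
  lra.
Qed.

Lemma Rabs_le_iff x t : Rabs x <= t <-> - t <= x <= t.
Proof. split; [unfold Rabs; destruct Rcase_abs; lra | apply Rabs_le]. Qed.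

Lemma Rmin_clamp P q t : t <= P -> Rabs (Rmin P q - t) <= Rabs (q - t).
Proof.
  intros Ht. unfold Rmin. destruct (Rle_dec P q); [|lra].
  rewrite !Rabs_pos_eq by lra. lra.
Qed.

Lemma pow2_half K : 2 ^ K * (/2) ^ K = 1.
Proof. rewrite <- Rpow_mult_distr, Rinv_r, pow1 by lra. reflexivity. Qed.

Lemma scaled_rat_err K a b c r : 0 <= r <= 1 -> Rabs (r - ratc a b c) <= (/2) ^ K ->
  Rabs (INR (scaled_rat K a b c) - r * 2 ^ K) <= 2.
Proof.
  intros Hr Happ. unfold scaled_rat. rewrite INR_min, INR_pow2.
  pose proof (pow_lt 2 K ltac:(lra)) as HP. pose proof (pow2_half K) as HPh.
  pose proof (lt_0_INR (S c) ltac:(lia)) as HD.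
  set (rp := Rmax (INR a - INR b) 0 / INR (S c)).
  assert (Hrp : Rabs (r - rp) <= (/2) ^ K).
  { eapply Rle_trans; [|exact Happ]. unfold rp, ratc, Rmax. destruct Rle_dec; [|lra].
    assert ((INR a - INR b) / INR (S c) <= 0).
    { unfold Rdiv. pose proof (Rinv_0_lt_compat _ HD). nra. }
    unfold Rdiv at 1. rewrite Rmult_0_l, Rminus_0_r, !Rabs_pos_eq by lra. lra. }
  assert (Hq : rp * 2 ^ K - 1 < INR ((a - b) * 2 ^ K / S c) <= rp * 2 ^ K).
  { replace (rp * 2 ^ K) with (INR ((a - b) * 2 ^ K) / INR (S c)).
    - apply INR_div_floor. lia.
    - rewrite mult_INR, INR_pow2, INR_sub_trunc. unfold rp. field. lra. }
  eapply Rle_trans; [apply Rmin_clamp; nra|].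
  apply Rabs_le_iff in Hrp. apply Rabs_le_iff. nra.
Qed.

Lemma iexp_err K p f0 f1 pr F0 F1 e :
  (p <= 2 ^ K)%nat -> 0 <= pr <= 1 -> 0 <= F0 <= 1 -> 0 <= F1 <= 1 ->
  Rabs (INR p - pr * 2 ^ K) <= 2 ->
  Rabs (INR f0 - F0 * 2 ^ K) <= e -> Rabs (INR f1 - F1 * 2 ^ K) <= e ->
  Rabs (INR (iexp K p f0 f1) - (pr * F1 + (1 - pr) * F0) * 2 ^ K) <= e + 3.
Proof.
  intros Hpn Hpr HF0 HF1 Ep E0 E1. unfold iexp.
  pose proof (le_INR _ _ Hpn) as Hp. rewrite INR_pow2 in Hp. pose proof (pos_INR p).
  pose proof (pow_lt 2 K ltac:(lra)) as HP. set (P := 2 ^ K) in *.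
  set (Z := ((P - INR p) * INR f0 + INR p * INR f1) / P).
  assert (Hfloor : Z - 1 < INR (((2 ^ K - p) * f0 + p * f1) / 2 ^ K) <= Z).
  { replace Z with (INR ((2 ^ K - p) * f0 + p * f1) / INR (2 ^ K)).
    - apply INR_div_floor. pose proof (Nat.pow_nonzero 2 K). lia.
    - rewrite plus_INR, !mult_INR, (minus_INR _ _ Hpn), INR_pow2. reflexivity. }
  (* the exact value splits into a convex combination of the value errors and the
     effect of the probability error *)
  assert (Hsplit : Z - (pr * F1 + (1 - pr) * F0) * P =
     ((P - INR p) * (INR f0 - F0 * P) + INR p * (INR f1 - F1 * P)) / P
     + (INR p - pr * P) * (F1 - F0)).
  { unfold Z. field. lra. }
  assert (Hconv : Rabs (((P - INR p) * (INR f0 - F0 * P) + INR p * (INR f1 - F1 * P)) / P) <= e).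
  { unfold Rdiv. rewrite Rabs_mult, Rabs_inv, (Rabs_pos_eq P) by lra.
    apply Rmult_le_reg_r with P; auto. rewrite Rmult_assoc, Rinv_l, Rmult_1_r by lra.
    eapply Rle_trans; [apply Rabs_triang|].
    rewrite !Rabs_mult, (Rabs_pos_eq (P - INR p)), (Rabs_pos_eq (INR p)) by lra.
    assert (0 <= P - INR p) by lra. nra. }
  assert (Hprob : Rabs ((INR p - pr * P) * (F1 - F0)) <= 2).
  { rewrite Rabs_mult. assert (Rabs (F1 - F0) <= 1) by (apply Rabs_le; lra).
    pose proof (Rabs_pos (INR p - pr * P)). pose proof (Rabs_pos (F1 - F0)). nra. }
  apply Rabs_le_iff in Hconv, Hprob. apply Rabs_le_iff. lra.
Qed.

Lemma Rmax_diff a b c d t :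
  Rabs (a - c) <= t -> Rabs (b - d) <= t -> Rabs (Rmax a b - Rmax c d) <= t.
Proof.
  intros H1%Rabs_le_iff H2%Rabs_le_iff. apply Rabs_le_iff.
  unfold Rmax. destruct (Rle_dec a b), (Rle_dec c d); lra.
Qed.

Section IntegerGame.
Variables (phi : forecast) (A : nat -> bstr -> bool) (n K : nat) (lo hi hit : bstr -> nat).
Hypotheses (Hlo_le : forall s, (lo s <= 2 ^ K)%nat) (Hhi_le : forall s, (hi s <= 2 ^ K)%nat)
  (Hlo : forall s, Rabs (INR (lo s) - flo phi s * 2 ^ K) <= 2)
  (Hhi : forall s, Rabs (INR (hi s) - fhi phi s * 2 ^ K) <= 2)
  (Hhit : forall s, hit s = if A n s then 1%nat else 0%nat).

Lemma int_value_err k s :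
  Rabs (INR (int_value lo hi hit K k s) - game_value phi A n k s * 2 ^ K) <= 3 * INR k.
Proof.
  revert s; induction k as [|k IH]; intros s; cbn [int_value game_value].
  - rewrite Rmult_0_l, Rminus_0_r. simpl. rewrite Rabs_R0. lra.
  - rewrite Hhit, S_INR. unfold node_val, cond. destruct (A n s); cbn [Nat.eqb].
    + rewrite Rmult_1_l, INR_pow2, Rminus_diag, Rabs_R0. pose proof (pos_INR k). lra.
    + rewrite INR_max. unfold uexp.
      rewrite (Rmult_comm (Rmax _ _)), <- RmaxRmult by (apply pow_le; lra).
      rewrite !(Rmult_comm (2 ^ K)).
      destruct (f_ok phi s) as [? [? ?]].
      pose proof (game_value_bounds phi A n k (s ++ [false])).
      pose proof (game_value_bounds phi A n k (s ++ [true])).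
      replace (3 * (INR k + 1)) with (3 * INR k + 3) by lra.
      apply Rmax_diff; apply iexp_err; auto; lra.
Qed.
End IntegerGame.

Lemma rescaled_err X v N l :
  Rabs (X - v * 2 ^ (N + 3 + l)) <= 3 * INR l -> Rabs (X / 2 ^ (N + 3 + l) - v) <= (/2) ^ (N + 1).
Proof.
  intros H. set (K := (N + 3 + l)%nat) in *.
  assert (H3l : 3 * INR l <= 2 ^ (l + 2)).
  { pose proof (Nat.pow_gt_lin_r 2 l ltac:(lia)) as Hl. apply lt_INR in Hl.
    rewrite INR_pow2 in Hl. pose proof (pow_lt 2 l ltac:(lra)). rewrite pow_add. simpl. lra. }
  pose proof (pow_lt 2 K ltac:(lra)). pose proof (pow2_half K).
  replace (X / 2 ^ K - v) with ((X - v * 2 ^ K) * (/2) ^ K) by (rewrite pow_inv; field; lra).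
  rewrite Rabs_mult, (Rabs_pos_eq ((/2) ^ K)) by (apply pow_le; lra).
  replace ((/2) ^ (N + 1)) with (2 ^ (l + 2) * (/2) ^ K).
  - apply Rmult_le_compat_r; [apply pow_le|]; lra.
  - unfold K. replace (N + 3 + l)%nat with ((l + 2) + (N + 1))%nat by lia.
    rewrite (pow_add (/2)), <- Rmult_assoc, pow2_half. apply Rmult_1_l.
Qed.

(* The algorithm: for test level [n] and accuracy [N], take the horizon
   [l = e (N + 1) n] supplied by the Schnorr test and the precision [K = N + 3 + l],
   and read off the root value after [l] steps of tabulated backward induction. *)
Definition approx_value (lo hi hit e : nat -> nat -> nat) (n N : nat) : nat :=
  (digit (2 ^ (N + 3 + e (N + 1) n) + 1)
     (table lo hi hit n (e (N + 1) n) (N + 3 + e (N + 1) n) (e (N + 1) n)) 0)%nat.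

Lemma rec_approx_value lo hi hit e :
  recursive2 lo -> recursive2 hi -> recursive2 hit -> recursive2 e ->
  recursive2 (approx_value lo hi hit e).
Proof.
  intros. apply recursive2_rec. unfold approx_value, digit. rec_closure.
  apply rec_lift4; [apply rec_table; auto | rec_closure..].
Qed.

Lemma approx_value_err (phi : forecast) (A : nat -> bstr -> bool)
  (lo hi hit e : nat -> nat -> nat) n N :
  (forall c K, (lo c K <= 2 ^ K)%nat) -> (forall c K, (hi c K <= 2 ^ K)%nat) ->
  (forall s K, Rabs (INR (lo (bcode s) K) - flo phi s * 2 ^ K) <= 2) ->
  (forall s K, Rabs (INR (hi (bcode s) K) - fhi phi s * 2 ^ K) <= 2) ->
  (forall s, hit n (bcode s) = if A n s then 1%nat else 0%nat) ->
  Rabs (ratc (approx_value lo hi hit e n N) 0 (2 ^ (N + 3 + e (N + 1) n) - 1)%nat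
        - game_value phi A n (e (N + 1)%nat n) []) <= (/2) ^ (N + 1).
Proof.
  intros Hlo_le Hhi_le Hlo Hhi Hhit. set (l := e (N + 1)%nat n). set (K := (N + 3 + l)%nat).
  assert (HK : (S (2 ^ K - 1) = 2 ^ K)%nat) by (pose proof (Nat.pow_nonzero 2 K); lia).
  unfold ratc. rewrite HK, INR_pow2. simpl INR at 2. rewrite Rminus_0_r.
  apply rescaled_err.
  change (approx_value lo hi hit e n N)
    with (digit (2 ^ K + 1) (table lo hi hit n l K l) (bcode [])).
  rewrite (table_correct lo hi hit Hlo_le Hhi_le n l K l []) by reflexivity.
  apply int_value_err; auto.
Qed.

Lemma upper_prob_An_bounds phi A n l d :
  Rbar_le (upper_prob phi (fun w => cylset (An A n) w /\ ~ cylset (An_lt A n l) w)) (Finite d) ->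
  exists y, upper_prob phi (cylset (An A n)) = Finite y /\
    game_value phi A n l [] <= y <= game_value phi A n l [] + d.
Proof.
  intros Hd.
  assert (Hlb : Rbar_le (Finite (game_value phi A n l [])) (upper_prob phi (cylset (An A n)))).
  { rewrite <- upper_prob_horizon. apply upper_prob_mono.
    intros w [s [[Hs _] Hw]]. exists s. split; auto. }
  assert (Hub : Rbar_le (upper_prob phi (cylset (An A n))) (Finite (game_value phi A n l [] + d))).
  { apply (upper_prob_subadditive _ _ (horizon_event A n l)
             (fun w => cylset (An A n) w /\ ~ cylset (An_lt A n l) w)); auto.
    - intros w Hw. destruct (classic (horizon_event A n l w)); auto.
    - rewrite upper_prob_horizon. apply Rle_refl. }
  destruct (upper_prob phi (cylset (An A n))) as [y| |]; simpl in *; try contradiction.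
  exists y. auto.
Qed.

Theorem proposition5p5 (phi : forecast) (A : nat -> bstr -> bool) :
  computable_forecast phi ->
  schnorr_test phi A ->
  computable_rbar_seq (fun n => upper_prob phi (cylset (An A n))).
Proof.
  intros [[la [lb [lc [Rla [Rlb [Rlc Hlo]]]]]] [ha [hb [hc [Rha [Rhb [Rhc Hhi]]]]]]]
         [[chi [Rchi Hchi]] [_ [e [Re He]]]].
  set (lo := fun c K => scaled_rat K (la c K) (lb c K) (lc c K)).
  set (hi := fun c K => scaled_rat K (ha c K) (hb c K) (hc c K)).
  assert (Rlo : recursive2 lo) by (apply recursive2_rec; unfold lo, scaled_rat; rec_closure).
  assert (Rhi : recursive2 hi) by (apply recursive2_rec; unfold hi, scaled_rat; rec_closure).
  (* the [N]-th approximation of the [n]-th value is [approx_value n N / 2 ^ K] *)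
  exists (approx_value lo hi chi e), (fun _ _ => 0%nat),
    (fun n N => 2 ^ (N + 3 + e (N + 1) n) - 1)%nat.
  split; [apply rec_approx_value; auto|].
  split; [apply recursive2_rec; rec_closure|]. split; [apply recursive2_rec; rec_closure|].
  intros n N.
  (* both the true value and the approximation are [2^-(N+1)]-close to the game value *)
  destruct (upper_prob_An_bounds phi A n (e (N + 1)%nat n) _ (He (N + 1)%nat n _ (le_n _)))
    as [y [Hy Hbounds]].
  exists y. split; [exact Hy|].
  assert (Happrox := approx_value_err phi A lo hi chi e n N
    (fun c K => Nat.le_min_l _ _) (fun c K => Nat.le_min_l _ _)
    (fun s K => scaled_rat_err _ _ _ _ _ (flo_bounds phi s) (Hlo s K))
    (fun s K => scaled_rat_err _ _ _ _ _ (fhi_bounds phi s) (Hhi s K)) (Hchi n)).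
  apply Rabs_le_iff in Happrox. apply Rabs_le_iff.
  rewrite (pow_add (/2) N 1) in Happrox, Hbounds. simpl pow in Happrox, Hbounds. lra.
Qed.
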